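(* Let $q$ be a power of an odd prime with $q\equiv 3\pmod 4$, and let $k\equiv 0\pmod 4$ be a positive integer. Let $C_k=\{x\in\mathbb{F}_q^k : -x_1^2+x_2^2+\cdots+x_k^2=0\}$ and let $G_{Q,k}$ be the Cayley graph with vertex set $\mathbb{F}_q^k$ in which $x$ and $y$ are adjacent iff $x-y\in C_k$. Then its eigenvalues $\{\lambda_m\}_{m\in\mathbb{F}_q^k}$ are \[ \lambda_m=q^k\cdot\begin{cases} q^{-1}\delta_0(m)-q^{-\frac{k}{2}}+q^{-\frac{k+2}{2}} & \text{if } m\in C_k,\\ q^{-\frac{k+2}{2}} & \text{if } m\notin C_k.\end{cases}\]
   Context: Let $\chi$ be the principal (canonical) additive character of $\mathbb{F}_q$. The eigenvalue $\lambda_m$ of the Cayley graph is the one associated with the eigenvector $x\mapsto\chi(m\cdot x)$, namely $\lambda_m=\sum_{c\in C_k}\chi(-m\cdot c)$. $\delta_0(m)=1$ if $m=(0,\dots,0)$ and $\delta_0(m)=0$ otherwise. *)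

From HB Require Import structures.
From mathcomp Require Import all_boot all_order all_algebra all_field.
Set Implicit Arguments. Unset Strict Implicit. Unset Printing Implicit Defensive.
Import Order.TTheory GRing.Theory Num.Theory.
Local Open Scope ring_scope.

Section Defs.
Variable F : finFieldType.
Variable p : nat. (* intended: the characteristic of F *)

(* absolute trace F -> F_p (valued in the prime subfield of F): #|F| = p^n *)
Definition abs_trace (x : F) : F :=
  \sum_(i < logn p #|F|) x ^+ (p ^ i).

Definition trace_nat (x : F) : nat :=
  find (fun t : nat => t%:R == abs_trace x) (iota 0 p).

(* e^{2 pi i / p} in algC: p.-root (-1) has argument pi/p, its square 2pi/p *)
Definition omega_p : algC := (p.-root (-1)) ^+ 2.

Definition chi (x : F) : algC := omega_p ^+ trace_nat x.

Variable k : nat.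

Definition dotv (m x : 'rV[F]_k) : F := \sum_(i < k) m ord0 i * x ord0 i.

(* Q(x) = -x_1^2 + x_2^2 + ... + x_k^2 (index 0 is the first coordinate) *)
Definition Qform (x : 'rV[F]_k) : F :=
  \sum_(i < k) (if val i == 0%N then -1 else 1) * x ord0 i ^+ 2.

Definition Ck : {set 'rV[F]_k} := [set x | Qform x == 0].

Definition cay_adj (x y : 'rV[F]_k) : bool := (x - y) \in Ck.

Definition lambda (m : 'rV[F]_k) : algC := \sum_(c in Ck) chi (- dotv m c).

Definition delta0 (m : 'rV[F]_k) : algC := (m == 0)%:R.
End Defs.

From HB Require Import structures.
From mathcomp Require Import all_boot all_order all_algebra all_field.
From mathcomp Require Import zify ring.
Import Order.TTheory GRing.Theory Num.Theory.
Local Open Scope ring_scope.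
Set Implicit Arguments. Unset Strict Implicit. Unset Printing Implicit Defensive.

(* Write ψ for the canonical additive character and g(t) = Σ_x ψ(t x²) for the quadratic
   Gauss sum.  ψ is a nontrivial character because the absolute trace is additive, takes
   values fixed by Frobenius, i.e. in the prime field, and is a nonzero polynomial of
   degree q/p.  Detecting Q(c) = 0 by orthogonality gives q λ_m = Σ_t Σ_c ψ(t Q(c) − m·c).
   For t ≠ 0 the inner sum factors over the coordinates and, after completing the square
   in each, equals g(−t) g(t)^(k−1) ψ(−Q(m)/(4t)).  As q ≡ 3 (mod 4), −1 is not a square,
   so #{x | x² = b} + #{x | x² = −b} = 2 for every b; this gives g(−t) = −g(t), hence
   g(t)² = −g(t) g(−t) = −q, and for k ≡ 0 (mod 4) the Gauss-sum factor is −q^(k/2).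
   Finally Σ_(t ≠ 0) ψ(−Q(m)/(4t)) = q [Q(m) = 0] − 1. *)

Lemma sum_row_prod (T : finType) (R : comPzSemiRingType) (k : nat) (h : 'I_k -> T -> R) :
  \sum_(c : 'rV[T]_k) \prod_(i < k) h i (c ord0 i) = \prod_(i < k) \sum_(x : T) h i x.
Proof.
rewrite bigA_distr_bigA (reindex (fun f : {ffun 'I_k -> T} => \row_i f i)) /=.
  by apply: eq_bigr => f _; apply: eq_bigr => i _; rewrite mxE.
exists (fun c : 'rV[T]_k => [ffun i => c ord0 i]) => [f _ | c _].
  by apply/ffunP => i; rewrite ffunE mxE.
by apply/rowP => i; rewrite mxE ffunE.
Qed.

Lemma dotvB (F : finFieldType) k (m x y : 'rV[F]_k) : dotv m (x - y) = dotv m x - dotv m y.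
Proof. by rewrite /dotv -sumrB; apply: eq_bigr => i _; rewrite !mxE mulrBr. Qed.

Lemma sqr_neqN1_card_mod4 (F : finFieldType) :
  (2 : F) != 0 -> (#|F| %% 4 = 3)%N -> forall x : F, x ^+ 2 != -1.
Proof.
move=> two_neq0 cardF x; apply/eqP => x2.
have x_neq0 : x != 0 by apply: contra_eq_neq x2 => ->; rewrite expr0n eq_sym oppr_eq0 oner_neq0.
have : x ^+ #|F|.-1 = 1.
  apply: (mulfI x_neq0); rewrite -exprS prednK ?expf_card ?mulr1 //.
  by rewrite (leq_trans _ (finNzRing_gt1 F)).
have -> : #|F|.-1 = (2 * (2 * (#|F| %/ 4)).+1)%N by lia.
rewrite exprM x2 -signr_odd /= oddM /= expr1 => /eqP.
by rewrite eq_sym -addr_eq0 -mulr2n (negPf two_neq0).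
Qed.

Section SquareRoots.
Variable F : finFieldType.

Definition nsqrt (b : F) : nat := #|[set x : F | x ^+ 2 == b]|.

Lemma sum_sqr_nsqrt (V : nmodType) (f : F -> V) :
  \sum_(x : F) f (x ^+ 2) = \sum_(b : F) f b *+ nsqrt b.
Proof.
rewrite (partition_big (fun x => x ^+ 2) predT) //; apply: eq_bigr => b _.
by rewrite -sumr_const; apply: eq_big => [x | x /eqP <-]; rewrite ?inE.
Qed.

Lemma sum_nsqrt : (\sum_(b : F) nsqrt b)%N = #|F|.
Proof.
have := sum_sqr_nsqrt (fun _ => 1%N); rewrite sum1_card => ->.
by apply: eq_bigr => b _; rewrite natn.
Qed.

Lemma nsqrt_sqr (y : F) : nsqrt (y ^+ 2) = (y != - y).+1.
Proof. by rewrite /nsqrt -cards2; apply: eq_card => x; rewrite !inE eqf_sqr. Qed.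

Lemma nsqrt_eq0 (b : F) : (forall x : F, x ^+ 2 != b) -> nsqrt b = 0%N.
Proof.
move=> no_root; apply/eqP; rewrite cards_eq0; apply/eqP/setP => x.
by rewrite !inE (negPf (no_root x)).
Qed.

Lemma nsqrt_le2 (b : F) : (nsqrt b <= 2)%N.
Proof.
have [/existsP [y /eqP <-] | /existsPn no_root] := boolP [exists y, y ^+ 2 == b].
  by rewrite nsqrt_sqr ltnS leq_b1.
by rewrite nsqrt_eq0.
Qed.

Hypothesis sqr_neqN1 : forall x : F, x ^+ 2 != -1.

Lemma nsqrtN_sqr (y : F) : y != 0 -> nsqrt (- y ^+ 2) = 0%N.
Proof.
move=> y_neq0; apply: nsqrt_eq0 => x; apply: contra (sqr_neqN1 (x / y)) => /eqP x2.
by rewrite expr_div_n x2 mulNr divff // sqrf_eq0.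
Qed.

Lemma nsqrtN_le2 (b : F) : (nsqrt b + nsqrt (- b) <= 2)%N.
Proof.
have [-> | b_neq0] := eqVneq b 0.
  by have := nsqrt_sqr 0; rewrite expr0n /= oppr0 eqxx => ->.
have [/existsP [y /eqP y2] | /existsPn no_root] := boolP [exists y, y ^+ 2 == b].
  rewrite -y2 nsqrtN_sqr ?addn0 ?nsqrt_le2 //.
  by apply: contra_neq b_neq0 => y0; rewrite -y2 y0 expr0n.
have [/existsP [y /eqP y2] | /existsPn no_rootN] := boolP [exists y, y ^+ 2 == - b].
  rewrite -[b]opprK -y2 nsqrtN_sqr ?add0n ?nsqrt_le2 //.
  by apply: contra_neq b_neq0 => y0; rewrite -[b]opprK -y2 y0 expr0n oppr0.
by rewrite !nsqrt_eq0.
Qed.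

Lemma nsqrtN_pair (b : F) : (nsqrt b + nsqrt (- b))%N = 2.
Proof.
(* Every term is at most 2 and the terms add up to 2q. *)
have sums : (\sum_(c : F) (nsqrt c + nsqrt (- c)) == \sum_(c : F) 2)%N.
  rewrite big_split /= sum_nsqrt (reindex_inj oppr_inj) /=.
  under eq_bigr do rewrite opprK.
  by rewrite sum_nsqrt sum_nat_const cardT -cardE addnn muln2.
move: sums; rewrite (leqif_sum (fun c _ => leqif_eq (nsqrtN_le2 c))).2.
by move=> /forall_inP /(_ b isT) /eqP.
Qed.

End SquareRoots.

Section AdditiveCharacter.
Variables (F : finFieldType) (R : idomainType) (psi : F -> R).
Hypothesis psiD : {morph psi : x y / x + y >-> x * y}.

Lemma sum_cayley_character k (S : {set 'rV[F]_k}) (m x : 'rV[F]_k) :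
  \sum_(y | x - y \in S) psi (dotv m y) = (\sum_(c in S) psi (- dotv m c)) * psi (dotv m x).
Proof.
rewrite (reindex_inj (inv_inj (subKr x))) /= mulr_suml.
by apply: eq_big => [c | c _]; rewrite ?subKr // dotvB addrC psiD.
Qed.

Hypothesis psi0 : psi 0 = 1.

Lemma psi_sum (I : Type) (r : seq I) (P : pred I) (f : I -> F) :
  psi (\sum_(i <- r | P i) f i) = \prod_(i <- r | P i) psi (f i).
Proof. exact: big_morph. Qed.

Hypothesis psi_nontrivial : exists y : F, psi y != 1.

Lemma sum_psi : \sum_(x : F) psi x = 0.
Proof.
have [y psi_y] := psi_nontrivial.
have shift : psi y * \sum_(x : F) psi x = \sum_(x : F) psi x.
  by rewrite mulr_sumr [RHS](reindex_inj (addrI y)); apply: eq_bigr => x _; rewrite psiD.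
have /eqP : (psi y - 1) * \sum_(x : F) psi x = 0 by rewrite mulrBl mul1r shift subrr.
by rewrite mulf_eq0 subr_eq0 (negPf psi_y) => /eqP.
Qed.

Lemma sum_psi_mul (a : F) : \sum_(x : F) psi (a * x) = (a == 0)%:R * #|F|%:R.
Proof.
have [-> | a_neq0] := eqVneq a 0.
  by under eq_bigr do rewrite mul0r psi0; rewrite sumr_const mul1r.
transitivity (\sum_(x : F) psi x); last by rewrite sum_psi mul0r.
by rewrite [RHS](reindex_inj (mulfI a_neq0)).
Qed.

Definition gauss (a : F) : R := \sum_(x : F) psi (a * x ^+ 2).

Section OddCharacteristic.
Hypothesis two_neq0 : (2 : F) != 0.

Let four_neq0 : (4 : F) != 0. Proof. by rewrite (natrM _ 2 2) mulf_neq0. Qed.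

Lemma gauss_complete_square (a b : F) : a != 0 ->
  \sum_(x : F) psi (a * x ^+ 2 - b * x) = psi (- (b ^+ 2 / (4 * a))) * gauss a.
Proof.
move=> a_neq0.
rewrite (reindex_inj (addIr (b / (2 * a)))) /gauss mulr_sumr; apply: eq_bigr => x _.
by rewrite -psiD; congr (psi _); field; rewrite a_neq0 two_neq0 four_neq0.
Qed.

Lemma gauss_mulN (a : F) : a != 0 -> gauss a * gauss (- a) = #|F|%:R.
Proof.
move=> a_neq0; rewrite /gauss mulr_suml.
have shift x : psi (a * x ^+ 2) * \sum_(y : F) psi (- a * y ^+ 2)
    = \sum_(u : F) psi (- a * u ^+ 2) * psi (- (2 * a * u) * x).
  rewrite mulr_sumr (reindex_inj (addrI x)); apply: eq_bigr => u _.
  by rewrite -!psiD; congr (psi _); ring.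
rewrite (eq_bigr _ (fun x _ => shift x)) exchange_big (bigD1 0) //= [X in _ + X]big1 => [|u u_neq0].
  under eq_bigr do rewrite !(expr0n, mulr0, mul0r, oppr0, psi0) mulr1.
  by rewrite sumr_const addr0.
rewrite -mulr_sumr sum_psi_mul oppr_eq0 !mulf_eq0.
by rewrite (negPf two_neq0) (negPf a_neq0) (negPf u_neq0) !mul0r mulr0.
Qed.

Section MinusOneNonsquare.
Hypothesis sqr_neqN1 : forall x : F, x ^+ 2 != -1.

Lemma gaussN (t : F) : t != 0 -> gauss (- t) = - gauss t.
Proof.
move=> t_neq0; apply/eqP; rewrite -addr_eq0 /gauss.
rewrite (sum_sqr_nsqrt (fun b => psi (- t * b))) (sum_sqr_nsqrt (fun b => psi (t * b))).
rewrite [X in X + _](reindex_inj oppr_inj) -big_split /=.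
under eq_bigr do rewrite mulrNN -mulrnDr addnC nsqrtN_pair //.
by rewrite sumrMnl sum_psi_mul (negPf t_neq0) mul0r mul0rn.
Qed.

Lemma gauss_sqr (t : F) : t != 0 -> gauss t ^+ 2 = - #|F|%:R.
Proof. by move=> t_neq0; rewrite -(gauss_mulN t_neq0) gaussN // mulrN opprK expr2. Qed.

Lemma gaussN_mul_exp (n : nat) (t : F) : t != 0 ->
  gauss (- t) * gauss t ^+ (2 * n).+1 = (-1) ^+ n * #|F|%:R ^+ n.+1.
Proof.
move=> t_neq0; rewrite exprS mulrA [gauss (- t) * _]mulrC gauss_mulN //.
by rewrite exprM gauss_sqr // -mulN1r exprMn mulrCA -exprS.
Qed.

Section Quadric.
Variable k : nat.
Local Notation q := (#|F|%:R : R).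

Definition qcoef (i : 'I_k) : F := if val i == 0%N then -1 else 1.

Definition qsum (m : 'rV[F]_k) (t : F) : R :=
  \sum_(c : 'rV[F]_k) psi (t * Qform c - dotv m c).

Lemma sum_Ck_qsum (m : 'rV[F]_k) :
  q * \sum_(c in Ck F k) psi (- dotv m c) = \sum_(t : F) qsum m t.
Proof.
rewrite mulr_sumr big_mkcond /qsum exchange_big /=; apply: eq_bigr => c _.
transitivity (\sum_(t : F) psi (Qform c * t) * psi (- dotv m c)); last first.
  by apply: eq_bigr => t _; rewrite psiD [t * _]mulrC.
by rewrite -mulr_suml sum_psi_mul inE; case: eqP; rewrite ?mul1r ?mul0r.
Qed.

Lemma qsum_prod (m : 'rV[F]_k) (t : F) :
  qsum m t = \prod_(i < k) \sum_(x : F) psi (t * (qcoef i * x ^+ 2) - m ord0 i * x).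
Proof.
rewrite /qsum -sum_row_prod; apply: eq_bigr => c _; rewrite -psi_sum.
by rewrite /Qform /dotv mulr_sumr -sumrB.
Qed.

Lemma qsum0 (m : 'rV[F]_k) : qsum m 0 = (m == 0)%:R * q ^+ k.
Proof.
rewrite qsum_prod (eq_bigr (fun i => (m ord0 i == 0)%:R * q)) => [|i _]; last first.
  by rewrite -oppr_eq0 -sum_psi_mul; apply: eq_bigr => x _; rewrite mul0r sub0r mulNr.
have [-> | m_neq0] := eqVneq m 0.
  by under eq_bigr do rewrite mxE eqxx mul1r; rewrite prodr_const card_ord mul1r.
have [i m_i] : exists i, m ord0 i != 0.
  apply/existsP; apply: contraNT m_neq0; rewrite negb_exists => /forallP m0.
  by apply/eqP/rowP => i; rewrite mxE; apply/eqP/negPn/m0.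
by rewrite (bigD1 i) //= (negPf m_i) !mul0r.
Qed.

Hypotheses (k_gt0 : (0 < k)%N) (k_mod4 : (k %% 4 = 0)%N).

Lemma prod_gauss_qcoef (t : F) : t != 0 ->
  \prod_(i < k) gauss (t * qcoef i) = - q ^+ (k %/ 2).
Proof.
move=> t_neq0; rewrite (bigD1 (Ordinal k_gt0)) //= {1}/qcoef /= mulrN1.
rewrite (eq_bigr (fun _ => gauss t)) => [|i i_neq0]; last first.
  by rewrite /qcoef -val_eqE /= in i_neq0 *; rewrite (negPf i_neq0) mulr1.
rewrite prodr_const cardC1 card_ord.
have -> : k.-1 = (2 * (k %/ 2).-1).+1 by lia.
have : ((k %/ 2).-1 %% 2 = 1)%N by lia.
rewrite modn2 => half_odd.
by rewrite gaussN_mul_exp // -signr_odd half_odd mulN1r prednK //; lia.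
Qed.

Lemma qsum_neq0 (m : 'rV[F]_k) (t : F) : t != 0 ->
  qsum m t = - q ^+ (k %/ 2) * psi (- (Qform m / 4) / t).
Proof.
move=> t_neq0; have qcoef_neq0 i : qcoef i != 0.
  by rewrite /qcoef; case: ifP => _; rewrite ?oppr_eq0 oner_neq0.
rewrite qsum_prod (eq_bigr (fun i => psi (- (m ord0 i ^+ 2 / (4 * (t * qcoef i))))
    * gauss (t * qcoef i))) => [|i _]; last first.
  by rewrite -gauss_complete_square ?mulf_neq0 //; apply: eq_bigr => x _; rewrite mulrA.
rewrite big_split /= prod_gauss_qcoef // mulrC -psi_sum; congr (_ * psi _).
rewrite mulNr /Qform !mulr_suml -sumrN; apply: eq_bigr => i _.
by rewrite /qcoef; case: ifP => _; field; rewrite four_neq0 t_neq0 ?oppr_eq0 ?oner_neq0.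
Qed.

Lemma sum_qsum (m : 'rV[F]_k) :
  \sum_(t : F) qsum m t = (m == 0)%:R * q ^+ k - q ^+ (k %/ 2) * ((Qform m == 0)%:R * q - 1).
Proof.
rewrite (bigD1 0) //= qsum0; congr (_ + _).
rewrite (eq_bigr _ (fun t t_neq0 => qsum_neq0 m t_neq0)) -mulr_sumr mulNr.
congr (- (_ * _)).
set c := - (Qform m / 4).
have sum_all : \sum_(t : F) psi (c / t) = (Qform m == 0)%:R * q.
  rewrite (reindex_inj invr_inj); under eq_bigr do rewrite invrK.
  by rewrite sum_psi_mul /c oppr_eq0 mulf_eq0 invr_eq0 (negPf four_neq0) orbF.
by rewrite -sum_all [in RHS](bigD1 0) //= invr0 mulr0 psi0 addrAC subrr add0r.
Qed.

Lemma sum_Ck_character (m : 'rV[F]_k) :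
  q * \sum_(c in Ck F k) psi (- dotv m c)
    = (m == 0)%:R * q ^+ k - q ^+ (k %/ 2) * ((Qform m == 0)%:R * q - 1).
Proof. by rewrite sum_Ck_qsum sum_qsum. Qed.

End Quadric.
End MinusOneNonsquare.
End OddCharacteristic.

End AdditiveCharacter.

Section PrimeCharacteristic.
Variables (R : idomainType) (p : nat).
Hypothesis pcharRp : p \in [pchar R].

Lemma eqr_nat_modp (a b : nat) : (a%:R == b%:R :> R) = (a == b %[mod p]).
Proof.
wlog le_ba : a b / (b <= a)%N.
  by move=> IH; case: (leqP b a) => [|/ltnW] /IH; rewrite // eq_sym => ->.
by rewrite eqn_mod_dvd // (dvdn_pcharf pcharRp) natrB // subr_eq0.
Qed.

Lemma pFrobenius_fixed_nat (y : R) : y ^+ p = y -> y \in [seq t%:R | t <- iota 0 p].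
Proof.
move=> yp; apply: contraT => y_new.
pose P : {poly R} := 'X^p - 'X.
have size_P : size P = p.+1.
  rewrite size_polyDl size_polyXn // size_polyN size_polyX ltnS.
  exact/prime_gt1/(pcharf_prime pcharRp).
have P_neq0 : P != 0 by rewrite -size_poly_eq0 size_P.
have fixed_root z : z ^+ p = z -> root P z by move=> zp; rewrite rootE !hornerE zp subrr.
have roots : all (root P) (y :: [seq t%:R | t <- iota 0 p]).
  rewrite /= fixed_root //=; apply/allP => _ /mapP [t _ ->]; apply: fixed_root.
  exact: (rmorph_nat (pFrobenius_aut pcharRp)).
have uniq_roots : uniq (y :: [seq t%:R | t <- iota 0 p]).
  rewrite /= y_new map_inj_in_uniq ?iota_uniq // => a b.
  rewrite !mem_iota !add0n => lt_a lt_b /eqP.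
  by rewrite eqr_nat_modp !modn_small // => /eqP.
have := max_poly_roots P_neq0 roots uniq_roots.
by rewrite size_P /= size_map size_iota ltnn.
Qed.

Lemma pchar_odd_two_neq0 : odd p -> (2 : R) != 0.
Proof.
move=> p_odd; rewrite -(dvdn_pcharf pcharRp) dvdn_prime2 ?(pcharf_prime pcharRp) //.
by apply: contraTneq p_odd => ->.
Qed.

End PrimeCharacteristic.

Section AbsoluteTrace.
Variables (F : finFieldType) (p : nat).
Hypothesis pcharFp : p \in [pchar F].
Local Notation n := (logn p #|F|).

Let p_gt1 : (1 < p)%N. Proof. exact/prime_gt1/(pcharf_prime pcharFp). Qed.

Lemma abs_traceD : {morph @abs_trace F p : x y / x + y}.
Proof.
move=> x y; rewrite /abs_trace -big_split; apply: eq_bigr => i _.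
apply: exprDn_pchar; rewrite pnatX (eq_pnat _ (pcharf_eq pcharFp)) pnat_id //.
exact: pcharf_prime pcharFp.
Qed.

Lemma abs_trace_pFrobenius (x : F) : abs_trace p x ^+ p = abs_trace p x.
Proof.
rewrite -[_ ^+ p]/(pFrobenius_aut pcharFp _) rmorph_sum /abs_trace /=.
under eq_bigr do rewrite pFrobenius_autE -exprM -expnSr.
case: n (card_pprimeChar pcharFp) => [|n' cardF]; first by rewrite !big_ord0.
by rewrite big_ord_recr big_ord_recl /= -cardF expf_card expn0 expr1 addrC.
Qed.

Lemma trace_natE (x : F) : (trace_nat p x)%:R = abs_trace p x.
Proof.
have /mapP [t t_lt t_eq] := pFrobenius_fixed_nat pcharFp (abs_trace_pFrobenius x).
have has_t : has (fun s : nat => s%:R == abs_trace p x) (iota 0 p).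
  by apply/hasP; exists t; rewrite // t_eq.
have := has_t; rewrite has_find size_iota => find_lt.
by have := nth_find 0%N has_t; rewrite nth_iota // add0n => /eqP.
Qed.

Lemma abs_trace_nontrivial : exists y : F, abs_trace p y != 0.
Proof.
apply/existsP; apply: contraT; rewrite negb_exists => /forallP trace0.
have cardF : #|F| = (p ^ n)%N := card_pprimeChar pcharFp.
case En : n cardF => [|n'] cardF; first by have := finNzRing_gt1 F; rewrite cardF.
pose P : {poly F} := \sum_(i < n'.+1) 'X^(p ^ i).
have P_neq0 : P != 0.
  apply/eqP => /(congr1 (fun r : {poly F} => r`_1)) /eqP.
  rewrite coef0 coef_sum big_ord_recl big1 => [|i _]; last first.
    by rewrite coefXn ltn_eqF // (leq_trans _ (ltn_expl _ p_gt1)).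
  by rewrite coefXn expn0 eqxx addr0 oner_eq0.
have roots : all (root P) (enum F).
  apply/allP => y _; have := trace0 y; rewrite negbK /abs_trace En => /eqP trace_y.
  rewrite rootE horner_sum; apply/eqP; rewrite -[RHS]trace_y.
  by apply: eq_bigr => i _; rewrite hornerXn.
have size_P : (size P <= (p ^ n').+1)%N.
  apply: leq_trans (size_sum _ _ _) _; apply/bigmax_leqP => i _.
  by rewrite size_polyXn ltnS leq_pexp2l ?(ltnW p_gt1) // -ltnS.
have := leq_trans (max_poly_roots P_neq0 roots (enum_uniq F)) size_P.
by rewrite -cardE cardF expnS ltnS leqNgt ltn_Pmull // expn_gt0 ltnW.
Qed.

End AbsoluteTrace.

Lemma Re_leN1_eqN1 (y : algC) : `|y| = 1 -> 'Re y <= -1 -> y = -1.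
Proof.
move=> norm_y Re_y; have [] := leif_Re_Creal (- y).
rewrite raddfN normrN norm_y => le_Re; rewrite eq_le le_Re lerNr Re_y /=.
by move/esym/ger0_norm; rewrite normrN norm_y => /eqP; rewrite eq_sym eqr_oppLR => /eqP.
Qed.

(* n.-root (-1) maximizes the real part among the n-th roots of -1 in the closed upper
   half plane, which include a primitive 2n-th root of unity or its conjugate. *)
Lemma rootCN1_neqN1 n : (1 < n)%N -> n.-root (-1 : algC) != -1.
Proof.
move=> n_gt1; have n_gt0 := ltnW n_gt1.
have [z prim_z] : {z : algC | (2 * n).-primitive_root z}.
  by apply: C_prim_root_exists; rewrite muln_gt0.
have [y [yn y_neqN1 norm_y Im_y]] :
    exists y : algC, [/\ y ^+ n = -1, y != -1, `|y| = 1 & 0 <= 'Im y].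
  have zn : z ^+ n = -1.
    have : (z ^+ n) ^+ 2 == 1 by rewrite -exprM mulnC prim_expr_order.
    rewrite sqrf_eq1 -(prim_order_dvd prim_z) gtnNdvd /=; [exact/eqP | done | lia].
  have z_neqN1 : z != -1.
    apply/eqP => z_eq; have := prim_order_dvd prim_z 2.
    by rewrite z_eq sqrrN expr1n eqxx gtnNdvd //; lia.
  have norm_z : `|z| = 1.
    apply/eqP; rewrite -(pexpr_eq1 (n := (2 * n)%N)) ?muln_gt0 //.
    by rewrite -normrX (prim_expr_order prim_z); apply/eqP; exact: normr1.
  have [Im_z | /negbTE Im_z] := boolP (0 <= 'Im z); first by exists z.
  exists z^*; split.
  - by rewrite -rmorphXn zn rmorphN1.
  - by apply: contra z_neqN1 => /eqP z_eq; rewrite -[z]conjCK z_eq rmorphN1.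
  - by rewrite norm_conjC.
  - by rewrite Im_conj oppr_ge0 le_eqVlt real_ltNge ?Creal_Im ?Im_z ?orbT.
apply: contra y_neqN1 => /eqP rootN1; apply/eqP/Re_leN1_eqN1 => //.
by have := rootC_Re_max n_gt0 yn Im_y; rewrite rootN1 raddfN /= (Creal_ReP 1 (rpred1 _)).
Qed.

Lemma omega_p_prim_root p : prime p -> p.-primitive_root (omega_p p).
Proof.
move=> p_pr; have p_gt0 := prime_gt0 p_pr.
have omega_unity : omega_p p ^+ p = 1.
  by rewrite /omega_p -exprM mulnC exprM rootCK // sqrrN expr1n.
have [d prim_d /(primeP p_pr).2 d_eq] := prim_order_exists p_gt0 omega_unity.
case/pred2P: d_eq prim_d => -> // /prim_expr_order; rewrite expr1 /omega_p => /eqP.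
rewrite sqrf_eq1 (negPf (rootCN1_neqN1 (prime_gt1 p_pr))) orbF => /eqP root_eq1.
have := rootCK p_gt0 (-1 : algC); rewrite root_eq1 expr1n => /eqP.
by rewrite -subr_eq0 opprK -(natrD _ 1 1) pnatr_eq0.
Qed.

Section CanonicalCharacter.
Variables (F : finFieldType) (p : nat).
Hypothesis pcharFp : p \in [pchar F].
Let omega_prim := omega_p_prim_root (pcharf_prime pcharFp).

Lemma chi_eq1 (x : F) : (chi p x == 1) = (abs_trace p x == 0).
Proof.
by rewrite /chi -(prim_order_dvd omega_prim) (dvdn_pcharf pcharFp) (trace_natE pcharFp).
Qed.

Lemma chiD : {morph @chi F p : x y / x + y >-> x * y}.
Proof.
move=> x y; apply/eqP; rewrite /chi -exprD (eq_prim_root_expr omega_prim).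
by rewrite -(eqr_nat_modp pcharFp) natrD !(trace_natE pcharFp) (abs_traceD pcharFp).
Qed.

Lemma chi0 : chi p (0 : F) = 1.
Proof.
apply/eqP; rewrite chi_eq1 /abs_trace big1 // => i _.
by rewrite expr0n eqn0Ngt expn_gt0 prime_gt0 ?(pcharf_prime pcharFp).
Qed.

Lemma chi_nontrivial : exists y : F, chi p y != 1.
Proof. by have [y] := abs_trace_nontrivial pcharFp; exists y; rewrite chi_eq1. Qed.

End CanonicalCharacter.

Theorem theorem1p6 (F : finFieldType) (p q k : nat)
  (hp : prime p) (hp_odd : odd p) (hchar : p \in [pchar F])
  (hq : #|F| = q) (hq3 : (q %% 4 = 3)%N)
  (hk0 : (0 < k)%N) (hk4 : (k %% 4 = 0)%N) :
  forall m : 'rV[F]_k,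
    (* chi(m . x) is an eigenvector of the adjacency operator with eigenvalue lambda_m *)
    (forall x : 'rV[F]_k,
        \sum_(y | cay_adj x y) chi p (dotv m y) = lambda p m * chi p (dotv m x)) /\
    lambda p m =
      (q%:R : algC) ^+ k *
      (if m \in Ck F k then
         delta0 m / q%:R - (q%:R : algC) ^- (k %/ 2) + (q%:R : algC) ^- ((k + 2) %/ 2)
       else (q%:R : algC) ^- ((k + 2) %/ 2)).
Proof.
move=> m; split => [x | ]; first exact: (sum_cayley_character (chiD hchar) (Ck F k)).
have two_neq0 := pchar_odd_two_neq0 hchar hp_odd.
have sqr_neqN1 := sqr_neqN1_card_mod4 two_neq0 (etrans (congr1 (modn^~ 4) hq) hq3).
have := sum_Ck_character (chiD hchar) (chi0 hchar) (chi_nontrivial hchar)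
  two_neq0 sqr_neqN1 hk0 hk4 m.
have q_neq0 : (q%:R : algC) != 0 by rewrite pnatr_eq0 -hq -lt0n ltnW ?finNzRing_gt1.
rewrite -/(lambda p m) hq => /(canRL (mulKf q_neq0)) ->.
set X := (q%:R : algC) ^+ (k %/ 2).
have X_neq0 : X != 0 by rewrite expf_neq0.
have -> : (q%:R : algC) ^+ k = X * X by rewrite -exprD; congr (_ ^+ _); lia.
have -> : ((k + 2) %/ 2)%N = (k %/ 2).+1 by lia.
rewrite exprS -/X inE /delta0; have [Qm0 | Qm_neq0] := eqVneq (Qform m) 0.
  by rewrite /= mulr1n; field; rewrite X_neq0 q_neq0.
have -> : (m == 0) = false.
  apply: contra_neqF Qm_neq0 => /eqP ->.
  by rewrite /Qform big1 // => i _; rewrite mxE expr0n mulr0.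
by rewrite /= !mulr0n; field; rewrite X_neq0 q_neq0.
Qed.
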